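(* Let $v,w\in\mathbb{Z}^2$ be primitive with $v\times w=1$, and let $u_1,\dots,u_n\in\mathbb{Z}^2$ be primitive normals of lines through the origin subdividing the wedge determined by $v,w$ (each $u_i$ a positive linear combination of $v$ and $w$, listed counterclockwise), such that $v\times u_1=u_i\times u_{i+1}=u_n\times w=1$ for $1\le i\le n-1$. Set $u_0=v$, $u_{n+1}=w$. Let $z\in\mathbb{C}$ and $\underline\omega\in\mathbb{C}^2$ with $\underline\omega\times u_i\notin\mathbb{R}$ for $0\le i\le n+1$. Then $$\prod_{i=0}^{n}\big(e^{2\pi iz}\,\big|\,e^{2\pi i\,\underline\omega\times u_i},e^{-2\pi i\,\underline\omega\times u_{i+1}}\big)_\infty=\big(e^{2\pi iz}\,\big|\,e^{2\pi i\,\underline\omega\times v},e^{-2\pi i\,\underline\omega\times w}\big)_\infty.$$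
   Context: For $a,b\in\mathbb{C}^2$, $a\times b=\det[a,b]=a_1b_2-a_2b_1$. q-shifted factorial: for $x\in\mathbb{C}$ and $q_j=e^{2\pi i\omega_j}$, $\omega_j\in\mathbb{C}\setminus\mathbb{R}$: if all $|q_j|<1$, $(x|q_0,q_1)_\infty=\prod_{j_0,j_1\ge0}(1-xq_0^{j_0}q_1^{j_1})$; in general (symmetric in the $q_j$), if $|q_0|>1>|q_1|$ then $(x|q_0,q_1)_\infty=(q_0^{-1}x|q_0^{-1},q_1)_\infty^{-1}$, and if both $|q_0|,|q_1|>1$ then $(x|q_0,q_1)_\infty=(q_0^{-1}q_1^{-1}x|q_0^{-1},q_1^{-1})_\infty$. *)

From Stdlib Require Import Reals ZArith.
From Coquelicot Require Import Coquelicot.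
Open Scope R_scope.

Definition cexp (z : C) : C :=
  Cmult (RtoC (exp (Re z))) (cos (Im z), sin (Im z)).

Definition two_pi_i : C := (0, 2 * PI).

Fixpoint cpow (q : C) (n : nat) : C :=
  match n with O => RtoC 1 | S k => Cmult (cpow q k) q end.

Fixpoint cprod (n : nat) (f : nat -> C) : C :=
  match n with O => RtoC 1 | S k => Cmult (cprod k f) (f k) end.

Definition zcross (a b : Z * Z) : Z := (fst a * snd b - snd a * fst b)%Z.
Definition ccross (om : C * C) (u : Z * Z) : C :=
  Cminus (Cmult (fst om) (RtoC (IZR (snd u)))) (Cmult (snd om) (RtoC (IZR (fst u)))).

Definition zprimitive (u : Z * Z) : Prop := Z.gcd (fst u) (snd u) = 1%Z.

Definition qpoch_partial (x q0 q1 : C) (N : nat) : C :=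
  cprod N (fun j0 => cprod N (fun j1 =>
     Cminus (RtoC 1) (Cmult x (Cmult (cpow q0 j0) (cpow q1 j1))))).

(* (x | q0, q1)_oo for |q0|,|q1| < 1 : limit of the partial products
   (componentwise limit of real and imaginary parts) *)
Definition qpoch0 (x q0 q1 : C) : C :=
  (real (Lim_seq (fun N => Re (qpoch_partial x q0 q1 N))),
   real (Lim_seq (fun N => Im (qpoch_partial x q0 q1 N)))).

(* general (x | q0, q1)_oo for |q0|, |q1| <> 1 *)
Definition qpoch (x q0 q1 : C) : C :=
  if Rlt_dec (Cmod q0) 1 then
    if Rlt_dec (Cmod q1) 1 then qpoch0 x q0 q1
    else Cinv (qpoch0 (Cdiv x q1) q0 (Cinv q1))
  else
    if Rlt_dec (Cmod q1) 1 then Cinv (qpoch0 (Cdiv x q0) (Cinv q0) q1)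
    else qpoch0 (Cdiv x (Cmult q0 q1)) (Cinv q0) (Cinv q1).

(* (x | q0, q1)_oo is a well-defined (finite) value: no division by a
   vanishing product occurs in the mixed cases. *)
Definition qpoch_defined (x q0 q1 : C) : Prop :=
  if Rlt_dec (Cmod q0) 1 then
    if Rlt_dec (Cmod q1) 1 then True
    else qpoch0 (Cdiv x q1) q0 (Cinv q1) <> RtoC 0
  else
    if Rlt_dec (Cmod q1) 1 then qpoch0 (Cdiv x q0) (Cinv q0) q1 <> RtoC 0
    else True.

From Stdlib Require Import Reals ZArith Lia Lra.
From Coquelicot Require Import Coquelicot.
Open Scope R_scope.

(* The key identity is [(x | s, t)_oo = (x | st, t)_oo (xs | st, s)_oo] for [|s|, |t| < 1],
   obtained by cutting the quadrant [j0, j1 >= 0] along its diagonal.  Through the inversion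
   rules every factor of the statement is a quotient of such convergent products, and the
   identity then says that two adjacent cones [(u_j, u_(j+1))], [(u_(j+1), u_(j+2))] with
   [u_(j+1) = u_j + u_(j+2)] merge into the cone [(u_j, u_(j+2))] without changing the
   product.  A unimodular subdivision with an interior ray always has such a ray, at a
   maximum of the height [u x (w - v)], so induction on [n] merges all cones into [(v, w)]. *)

(** * Finite products and estimates *)

Lemma cprod_ext n f g : (forall i, (i < n)%nat -> f i = g i) -> cprod n f = cprod n g.
Proof.
  induction n as [|n IH]; intros H; simpl; auto.
  rewrite IH by (intros; apply H; lia). rewrite H by lia. reflexivity.
Qed.

Lemma cprod_mult n f g : cprod n (fun i => f i * g i)%C = (cprod n f * cprod n g)%C.
Proof. induction n as [|n IH]; simpl; [ring | rewrite IH; ring]. Qed.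

Lemma cprod_add m n f : cprod (m + n) f = (cprod m f * cprod n (fun k => f (m + k)%nat))%C.
Proof.
  induction n as [|n IH]; simpl.
  - rewrite Nat.add_0_r. ring.
  - rewrite Nat.add_succ_r. simpl. rewrite IH. ring.
Qed.

Lemma cprod_exchange n m f :
  cprod n (fun i => cprod m (fun j => f i j)) = cprod m (fun j => cprod n (fun i => f i j)).
Proof.
  induction n as [|n IH]; simpl.
  - induction m as [|m IHm]; simpl; [reflexivity | rewrite <- IHm; ring].
  - rewrite IH, <- cprod_mult. reflexivity.
Qed.

Lemma cprod_neq0 n (f : nat -> C) : (forall i, (i < n)%nat -> f i <> 0%C) -> cprod n f <> 0%C.
Proof.
  induction n as [|n IH]; intros H; simpl.
  - apply C1_nz.
  - apply Cmult_neq_0; [apply IH; intros; apply H | apply H]; lia.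
Qed.

Lemma cprod_div n (f g : nat -> C) : (forall i, (i < n)%nat -> g i <> 0%C) ->
  cprod n (fun i => f i / g i)%C = (cprod n f / cprod n g)%C.
Proof.
  induction n as [|n IH]; intros H; simpl.
  - field.
  - rewrite IH by (intros; apply H; lia).
    field. split; [apply H; lia | apply cprod_neq0; intros; apply H; lia].
Qed.

Lemma Cmod_cpow q n : Cmod (cpow q n) = Cmod q ^ n.
Proof. induction n as [|n IH]; simpl; [apply Cmod_1 | rewrite Cmod_mult, IH; ring]. Qed.

Lemma cpow_add q m n : cpow q (m + n) = (cpow q m * cpow q n)%C.
Proof.
  induction n as [|n IH]; simpl.
  - rewrite Nat.add_0_r. ring.
  - rewrite Nat.add_succ_r. simpl. rewrite IH. ring.
Qed.

Lemma cpow_mult p q n : cpow (p * q)%C n = (cpow p n * cpow q n)%C.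
Proof. induction n as [|n IH]; simpl; [ring | rewrite IH; ring]. Qed.

Fixpoint rsum (n : nat) (f : nat -> R) : R :=
  match n with O => 0 | S k => rsum k f + f k end.

Lemma rsum_scal n c f : rsum n (fun i => c * f i) = c * rsum n f.
Proof. induction n as [|n IH]; simpl; [ring | rewrite IH; ring]. Qed.

Lemma rsum_geom_le n r : 0 <= r < 1 -> rsum n (fun i => r ^ i) <= / (1 - r).
Proof.
  intros Hr.
  assert (E : rsum n (fun i => r ^ i) * (1 - r) = 1 - r ^ n).
  { induction n as [|n IH]; simpl; [ring | rewrite Rmult_plus_distr_r, IH; ring]. }
  pose proof (pow_le r n (proj1 Hr)).
  apply Rmult_le_reg_r with (1 - r); [lra|].
  rewrite E, Rinv_l by lra. lra.
Qed.

Lemma exp_le_exp a b : a <= b -> exp a <= exp b.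
Proof. intros [H | ->]; [left; apply exp_increasing, H | lra]. Qed.

Definition near_one (c : C) (b : R) : Prop := Cmod (c - 1)%C <= exp b - 1.

Lemma near_one_mono c a b : near_one c a -> a <= b -> near_one c b.
Proof. unfold near_one. intros H Hab. pose proof (exp_le_exp a b Hab). lra. Qed.

Lemma near_one_Cmod c b : near_one c b -> Cmod c <= exp b.
Proof.
  unfold near_one. intros H.
  replace c with (c - 1 + 1)%C by ring.
  eapply Rle_trans; [apply Cmod_triangle|]. rewrite Cmod_1. lra.
Qed.

Lemma near_one_mult c1 c2 b1 b2 :
  near_one c1 b1 -> near_one c2 b2 -> near_one (c1 * c2)%C (b1 + b2).
Proof.
  intros H1 H2. pose proof (near_one_Cmod c2 b2 H2). unfold near_one in *.
  replace (c1 * c2 - 1)%C with ((c1 - 1) * c2 + (c2 - 1))%C by ring.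
  eapply Rle_trans; [apply Cmod_triangle|]. rewrite Cmod_mult, exp_plus.
  pose proof (Cmod_ge_0 (c1 - 1)%C). pose proof (Cmod_ge_0 c2). nra.
Qed.

Lemma near_one_cprod n c b : (forall i, (i < n)%nat -> near_one (c i) (b i)) ->
  near_one (cprod n c) (rsum n b).
Proof.
  induction n as [|n IH]; intros H; simpl.
  - unfold near_one. rewrite exp_0. replace (1 - 1)%C with (RtoC 0) by ring. rewrite Cmod_0. lra.
  - apply near_one_mult; [apply IH; intros; apply H | apply H]; lia.
Qed.

Lemma near_one_sub a : near_one (1 - a)%C (Cmod a).
Proof.
  unfold near_one. replace (1 - a - 1)%C with (- a)%C by ring.
  rewrite Cmod_opp. pose proof (exp_ineq1_le (Cmod a)). lra.
Qed.

Lemma near_one_cprod_geom n c K r : 0 <= K -> 0 <= r < 1 ->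
  (forall i, (i < n)%nat -> near_one (c i) (K * r ^ i)) -> near_one (cprod n c) (K / (1 - r)).
Proof.
  intros HK Hr H. eapply near_one_mono; [apply near_one_cprod, H|].
  rewrite rsum_scal. apply Rmult_le_compat_l; [lra | apply rsum_geom_le, Hr].
Qed.

Lemma is_lim_seq_exp_geom c r : 0 <= r < 1 -> is_lim_seq (fun n => exp (c * r ^ n) - 1) 0.
Proof.
  intros Hr. replace 0 with (exp (c * 0) - 1) by (rewrite Rmult_0_r, exp_0; ring).
  apply is_lim_seq_minus'; [|apply is_lim_seq_const].
  apply is_lim_seq_continuous; [apply derivable_continuous_pt, derivable_pt_exp|].
  apply (is_lim_seq_scal_l _ c 0), is_lim_seq_geom. rewrite Rabs_pos_eq; lra.
Qed.

Definition is_lim_seqC (u : nat -> C) (l : C) : Prop :=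
  is_lim_seq (fun n => Re (u n)) (Re l) /\ is_lim_seq (fun n => Im (u n)) (Im l).

Lemma im_le_Cmod c : Rabs (Im c) <= Cmod c.
Proof.
  pose proof (Rmax_Cmod c). pose proof (Rmax_r (Rabs (fst c)) (Rabs (snd c))). unfold Im. lra.
Qed.

Lemma is_lim_seq_dist_bound (u e : nat -> R) l : is_lim_seq e 0 ->
  (forall n, Rabs (u n - l) <= e n) -> is_lim_seq u l.
Proof.
  intros He H. apply is_lim_seq_le_le with (fun n => l - e n) (fun n => l + e n).
  - intros n. specialize (H n). apply Rabs_le_between in H. lra.
  - replace (Finite l) with (Finite (l - 0)) by (f_equal; ring).
    apply is_lim_seq_minus'; [apply is_lim_seq_const | exact He].
  - replace (Finite l) with (Finite (l + 0)) by (f_equal; ring).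
    apply is_lim_seq_plus'; [apply is_lim_seq_const | exact He].
Qed.

Lemma is_lim_seqC_bound u l e : is_lim_seq e 0 ->
  (forall n, Cmod (u n - l)%C <= e n) -> is_lim_seqC u l.
Proof.
  intros He H. split; apply (is_lim_seq_dist_bound _ e _ He); intros n; specialize (H n).
  - pose proof (re_le_Cmod (u n - l)) as Hc.
    change (Re (u n - l)%C) with (Re (u n) - Re l) in Hc. lra.
  - pose proof (im_le_Cmod (u n - l)) as Hc.
    change (Im (u n - l)%C) with (Im (u n) - Im l) in Hc. lra.
Qed.

Lemma is_lim_seqC_ext u v l : (forall n, u n = v n) -> is_lim_seqC u l -> is_lim_seqC v l.
Proof.
  intros H [H1 H2]. split; eapply is_lim_seq_ext; eauto; intros n; simpl; rewrite H; reflexivity.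
Qed.

Lemma is_lim_seqC_mult u v a b :
  is_lim_seqC u a -> is_lim_seqC v b -> is_lim_seqC (fun n => u n * v n)%C (a * b)%C.
Proof.
  intros [Hu1 Hu2] [Hv1 Hv2]. split; simpl.
  - apply is_lim_seq_minus'; apply is_lim_seq_mult'; assumption.
  - apply is_lim_seq_plus'; apply is_lim_seq_mult'; assumption.
Qed.

Lemma is_lim_seqC_unique u a b : is_lim_seqC u a -> is_lim_seqC u b -> a = b.
Proof.
  intros [H1 H2] [H3 H4].
  apply is_lim_seq_unique in H1, H2, H3, H4.
  rewrite H1 in H3. rewrite H2 in H4. injection H3. injection H4.
  destruct a, b. simpl. congruence.
Qed.

Lemma qpoch0_of_lim x s t l : is_lim_seqC (qpoch_partial x s t) l -> qpoch0 x s t = l.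
Proof.
  intros [H1 H2]. unfold qpoch0.
  rewrite (is_lim_seq_unique _ _ H1), (is_lim_seq_unique _ _ H2). destruct l; reflexivity.
Qed.

Lemma ex_lim_seq_cauchy_bound (u e : nat -> R) : is_lim_seq e 0 ->
  (forall N k, Rabs (u (N + k)%nat - u N) <= e N) -> ex_finite_lim_seq u.
Proof.
  intros He H. apply ex_lim_seq_cauchy_corr. intros eps.
  apply is_lim_seq_Reals in He. destruct (He (eps / 2)) as [N HN]; [apply is_pos_div_2|].
  specialize (HN N (le_n N)). unfold R_dist in HN. rewrite Rminus_0_r in HN.
  assert (Hd : forall n, (N <= n)%nat -> Rabs (u n - u N) <= e N).
  { intros n Hn. replace n with (N + (n - N))%nat by lia. apply H. }
  exists N. intros n m Hn Hm. pose proof (Hd n Hn). pose proof (Hd m Hm).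
  pose proof (Rle_abs (e N)).
  replace (u n - u m) with ((u n - u N) - (u m - u N)) by ring.
  eapply Rle_lt_trans; [apply Rabs_triang|]. rewrite Rabs_Ropp. lra.
Qed.

Lemma ex_lim_seqC_cauchy_bound u e : is_lim_seq e 0 ->
  (forall N k, Cmod (u (N + k)%nat - u N)%C <= e N) -> exists l, is_lim_seqC u l.
Proof.
  intros He H.
  destruct (ex_lim_seq_cauchy_bound (fun n => Re (u n)) e He) as [lr Hr].
  { intros N k. eapply Rle_trans; [apply (re_le_Cmod (u (N + k)%nat - u N)) | apply H]. }
  destruct (ex_lim_seq_cauchy_bound (fun n => Im (u n)) e He) as [li Hi].
  { intros N k. eapply Rle_trans; [apply (im_le_Cmod (u (N + k)%nat - u N)) | apply H]. }
  exists (lr, li). split; assumption.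
Qed.

(** * Convergence of the double product *)

Definition square_prod N (g : nat -> nat -> C) : C :=
  cprod N (fun j0 => cprod N (fun j1 => g j0 j1)).

Definition hook_prod N (g : nat -> nat -> C) : C :=
  (cprod N (fun j1 => g N j1) * cprod (S N) (fun j0 => g j0 N))%C.

Lemma square_prod_S N g : square_prod (S N) g = (square_prod N g * hook_prod N g)%C.
Proof.
  unfold square_prod, hook_prod. simpl (cprod (S N) (fun j1 => _)).
  rewrite cprod_mult. simpl. ring.
Qed.

Lemma square_prod_hooks N g : square_prod N g = cprod N (fun k => hook_prod k g).
Proof.
  induction N as [|N IH]; [reflexivity|]. rewrite square_prod_S, IH. reflexivity.
Qed.

Definition qfactor (x s t : C) (j0 j1 : nat) : C := (1 - x * (cpow s j0 * cpow t j1))%C.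

Lemma qpoch_partial_square x s t N : qpoch_partial x s t N = square_prod N (qfactor x s t).
Proof. reflexivity. Qed.

Lemma near_one_qfactor x s t r j0 j1 : Cmod s <= r -> Cmod t <= r ->
  near_one (qfactor x s t j0 j1) (Cmod x * r ^ j0 * r ^ j1).
Proof.
  intros Hs Ht. eapply near_one_mono; [apply near_one_sub|].
  rewrite !Cmod_mult, !Cmod_cpow, Rmult_assoc.
  pose proof (Cmod_ge_0 s). pose proof (Cmod_ge_0 t).
  apply Rmult_le_compat_l; [apply Cmod_ge_0|].
  apply Rmult_le_compat; try apply pow_le; try apply pow_incr; lra.
Qed.

Section QpochConvergence.

Variables (x s t : C) (r : R).
Hypotheses (Hs : Cmod s <= r) (Ht : Cmod t <= r) (Hr1 : r < 1).

Let Hr : 0 <= r < 1.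
Proof. pose proof (Cmod_ge_0 s). lra. Qed.

Let c := 2 * Cmod x / (1 - r).

Let c_nonneg : 0 <= c.
Proof.
  pose proof (Cmod_ge_0 x). unfold c.
  apply Rmult_le_pos; [lra | left; apply Rinv_0_lt_compat; lra].
Qed.

Lemma near_one_hook N : near_one (hook_prod N (qfactor x s t)) (c * r ^ N).
Proof.
  pose proof (Cmod_ge_0 x). pose proof (pow_le r N (proj1 Hr)).
  eapply near_one_mono; [apply near_one_mult; apply near_one_cprod_geom
    with (K := Cmod x * r ^ N) (r := r)|]; auto; try (apply Rmult_le_pos; assumption).
  - intros k _. apply near_one_qfactor; assumption.
  - intros k _. eapply near_one_mono; [apply near_one_qfactor; eassumption | right; ring].
  - unfold c. right. field. lra.
Qed.

Lemma near_one_hooks_from N k :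
  near_one (cprod k (fun i => hook_prod (N + i) (qfactor x s t))) (c * r ^ N / (1 - r)).
Proof.
  pose proof (pow_le r N (proj1 Hr)).
  apply near_one_cprod_geom; [apply Rmult_le_pos; [exact c_nonneg | assumption] | exact Hr|].
  intros i _. eapply near_one_mono; [apply near_one_hook | rewrite pow_add; right; ring].
Qed.

Lemma qpoch_partial_cauchy N k :
  Cmod (qpoch_partial x s t (N + k) - qpoch_partial x s t N)%C
  <= exp (c / (1 - r)) * (exp (c / (1 - r) * r ^ N) - 1).
Proof.
  rewrite !qpoch_partial_square, !square_prod_hooks, cprod_add.
  set (P := cprod N _). set (Q := cprod k _).
  replace (P * Q - P)%C with (P * (Q - 1))%C by ring. rewrite Cmod_mult.
  apply Rmult_le_compat; try apply Cmod_ge_0.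
  - apply near_one_Cmod. eapply near_one_mono.
    + apply (near_one_hooks_from 0 N).
    + rewrite pow_O. lra.
  - eapply near_one_mono; [apply near_one_hooks_from | unfold Rdiv; right; ring].
Qed.

Lemma qpoch_partial_cv : exists l, is_lim_seqC (qpoch_partial x s t) l.
Proof.
  apply ex_lim_seqC_cauchy_bound with
    (e := fun N => exp (c / (1 - r)) * (exp (c / (1 - r) * r ^ N) - 1)).
  - replace 0 with (exp (c / (1 - r)) * 0) by ring.
    apply (is_lim_seq_scal_l _ _ 0), is_lim_seq_exp_geom, Hr.
  - apply qpoch_partial_cauchy.
Qed.

End QpochConvergence.

(** * The functional equation *)

Definition upper_tri N (g : nat -> nat -> C) : C :=
  cprod N (fun j => cprod (N - j) (fun k => g j (j + k)%nat)).

Definition lower_tri N (g : nat -> nat -> C) : C :=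
  cprod N (fun j => cprod (N - 1 - j) (fun k => g (j + k + 1)%nat j)).

Lemma upper_tri_S N g :
  upper_tri (S N) g = (upper_tri N g * cprod (S N) (fun j => g j N))%C.
Proof.
  unfold upper_tri.
  rewrite (cprod_ext (S N) _ (fun j => cprod (N - j) (fun k => g j (j + k)%nat) * g j N)%C).
  - rewrite cprod_mult. simpl. rewrite Nat.sub_diag. simpl. ring.
  - intros j Hj. replace (S N - j)%nat with (S (N - j)) by lia. simpl.
    replace (j + (N - j))%nat with N by lia. reflexivity.
Qed.

Lemma lower_tri_S N g :
  lower_tri (S N) g = (lower_tri N g * cprod N (fun j => g N j))%C.
Proof.
  unfold lower_tri. replace (S N - 1)%nat with N by lia. simpl (cprod (S N) _).
  rewrite Nat.sub_diag.
  rewrite (cprod_ext N _ (fun j => cprod (N - 1 - j) (fun k => g (j + k + 1)%nat j) * g N j)%C).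
  - rewrite cprod_mult. simpl (cprod 0 _).
    change (cprod N (g N)) with (cprod N (fun j => g N j)). ring.
  - intros j Hj. replace (N - j)%nat with (S (N - 1 - j)) by lia. simpl.
    replace (j + (N - 1 - j) + 1)%nat with N by lia. reflexivity.
Qed.

Lemma square_prod_tri N g : square_prod N g = (upper_tri N g * lower_tri N g)%C.
Proof.
  induction N as [|N IH]; [unfold square_prod, upper_tri, lower_tri; simpl; ring|].
  rewrite square_prod_S, IH, upper_tri_S, lower_tri_S. unfold hook_prod. ring.
Qed.

Definition upper_tail x s t N : C :=
  cprod N (fun j => cprod j (fun k => qfactor x s t j (N + k))).

Definition lower_tail x s t N : C :=
  cprod N (fun j => cprod (S j) (fun k => qfactor x s t (N + k) j)).

(* Substituting j1 = j0 + k turns the square of [(x | st, t)] into the triangle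
   [j0 <= j1 < N] of [(x | s, t)] plus a tail with [j1 >= N]; likewise
   [j0 = j1 + k + 1] for [(xs | st, s)] and the triangle [j1 < j0 < N]. *)
Lemma qpoch_partial_upper x s t N :
  qpoch_partial x (s * t)%C t N = (upper_tri N (qfactor x s t) * upper_tail x s t N)%C.
Proof.
  unfold qpoch_partial, upper_tri, upper_tail. rewrite <- cprod_mult.
  apply cprod_ext. intros j Hj.
  replace N with ((N - j) + j)%nat at 1 by lia. rewrite cprod_add. f_equal.
  - apply cprod_ext. intros k _. unfold qfactor. rewrite cpow_mult, cpow_add. ring.
  - apply cprod_ext. intros k _. unfold qfactor. rewrite cpow_mult.
    replace (N + k)%nat with (j + (N - j + k))%nat by lia. rewrite (cpow_add t j). ring.
Qed.

Lemma qpoch_partial_lower x s t N :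
  qpoch_partial (x * s)%C (s * t)%C s N = (lower_tri N (qfactor x s t) * lower_tail x s t N)%C.
Proof.
  unfold qpoch_partial, lower_tri, lower_tail. rewrite <- cprod_mult.
  apply cprod_ext. intros j Hj.
  replace N with ((N - 1 - j) + S j)%nat at 1 by lia. rewrite cprod_add. f_equal.
  - apply cprod_ext. intros k _. unfold qfactor.
    replace (j + k + 1)%nat with (S (j + k)) by lia. simpl (cpow s (S _)).
    rewrite cpow_mult, cpow_add. ring.
  - apply cprod_ext. intros k _. unfold qfactor. rewrite cpow_mult.
    replace (N + k)%nat with (S (j + (N - 1 - j + k))) by lia. simpl (cpow s (S _)).
    rewrite (cpow_add s j). ring.
Qed.

Lemma near_one_double_geom N (m : nat -> nat) (c : nat -> nat -> C) K r :
  0 <= K -> 0 <= r < 1 -> (forall j k, near_one (c j k) (K * r ^ j * r ^ k)) ->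
  near_one (cprod N (fun j => cprod (m j) (c j))) (K / (1 - r) ^ 2).
Proof.
  intros HK Hr H.
  assert (Hi : 0 < / (1 - r)) by (apply Rinv_0_lt_compat; lra).
  eapply near_one_mono.
  - apply near_one_cprod_geom with (K := K / (1 - r)); [unfold Rdiv; nra | exact Hr|].
    intros j _. eapply near_one_mono.
    + apply near_one_cprod_geom with (K := K * r ^ j); [pose proof (pow_le r j); nra | exact Hr|].
      intros k _. apply H.
    + right. unfold Rdiv. ring.
  - right. field. lra.
Qed.

Lemma is_lim_seqC_tails x s t r : Cmod s <= r -> Cmod t <= r -> r < 1 ->
  is_lim_seqC (fun N => upper_tail x s t N * lower_tail x s t N)%C 1.
Proof.
  intros Hs Ht Hr1. pose proof (Cmod_ge_0 s). pose proof (Cmod_ge_0 x).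
  assert (Hr : 0 <= r < 1) by lra.
  apply is_lim_seqC_bound with (e := fun N => exp (2 * Cmod x / (1 - r) ^ 2 * r ^ N) - 1).
  { apply is_lim_seq_exp_geom, Hr. }
  intros N. pose proof (pow_le r N (proj1 Hr)).
  eapply near_one_mono; [apply near_one_mult; apply near_one_double_geom
    with (K := Cmod x * r ^ N) (r := r); auto; try (apply Rmult_le_pos; assumption)|].
  - intros j k. eapply near_one_mono; [apply near_one_qfactor; eassumption|].
    rewrite pow_add. right. ring.
  - intros j k. eapply near_one_mono; [apply near_one_qfactor; eassumption|].
    rewrite pow_add. right. ring.
  - right. unfold Rdiv. ring.
Qed.

Lemma qpoch0_split x s t : Cmod s < 1 -> Cmod t < 1 ->
  qpoch0 x s t = (qpoch0 x (s * t)%C t * qpoch0 (x * s)%C (s * t)%C s)%C.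
Proof.
  intros Hs Ht.
  set (r := Rmax (Cmod s) (Cmod t)).
  assert (Hsr : Cmod s <= r) by apply Rmax_l.
  assert (Htr : Cmod t <= r) by apply Rmax_r.
  assert (Hr : r < 1) by (apply Rmax_lub_lt; assumption).
  assert (Hstr : Cmod (s * t)%C <= r).
  { rewrite Cmod_mult. pose proof (Cmod_ge_0 s). pose proof (Cmod_ge_0 t). nra. }
  destruct (qpoch_partial_cv x s t r Hsr Htr Hr) as [l1 H1].
  destruct (qpoch_partial_cv x (s * t)%C t r Hstr Htr Hr) as [l2 H2].
  destruct (qpoch_partial_cv (x * s)%C (s * t)%C s r Hstr Hsr Hr) as [l3 H3].
  rewrite (qpoch0_of_lim _ _ _ _ H1), (qpoch0_of_lim _ _ _ _ H2), (qpoch0_of_lim _ _ _ _ H3).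
  apply (is_lim_seqC_unique (fun N => qpoch_partial x (s * t)%C t N
                                      * qpoch_partial (x * s)%C (s * t)%C s N)%C).
  - rewrite <- (Cmult_1_r l1).
    eapply is_lim_seqC_ext; [|apply is_lim_seqC_mult, (is_lim_seqC_tails x s t r); eassumption].
    intros N. rewrite qpoch_partial_upper, qpoch_partial_lower, qpoch_partial_square,
      square_prod_tri. ring.
  - apply is_lim_seqC_mult; assumption.
Qed.

Lemma qpoch0_sym x s t : qpoch0 x s t = qpoch0 x t s.
Proof.
  assert (H : forall N, qpoch_partial x s t N = qpoch_partial x t s N).
  { intros N. unfold qpoch_partial. rewrite cprod_exchange.
    do 2 (apply cprod_ext; intros). rewrite (Cmult_comm (cpow s _)). reflexivity. }
  unfold qpoch0. f_equal; f_equal; apply Lim_seq_ext; intros N; rewrite H; reflexivity.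
Qed.

(** * Exponential parametrisation *)

Lemma cexp_add a b : cexp (a + b)%C = (cexp a * cexp b)%C.
Proof.
  destruct a as [a1 a2], b as [b1 b2]. unfold cexp. simpl.
  rewrite exp_plus, cos_plus, sin_plus. unfold Cmult, RtoC. simpl. f_equal; ring.
Qed.

Lemma Cmod_cexp z : Cmod (cexp z) = exp (Re z).
Proof.
  unfold cexp. rewrite Cmod_mult, Cmod_R, Rabs_pos_eq by (left; apply exp_pos).
  unfold Cmod. simpl. rewrite !Rmult_1_r.
  replace (cos (Im z) * cos (Im z) + sin (Im z) * sin (Im z)) with 1
    by (rewrite <- (sin2_cos2 (Im z)); unfold Rsqr; ring).
  rewrite sqrt_1. ring.
Qed.

Definition e2pi (c : C) : C := cexp (two_pi_i * c)%C.

Lemma e2pi_add a b : e2pi (a + b)%C = (e2pi a * e2pi b)%C.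
Proof. unfold e2pi. rewrite <- cexp_add. f_equal. ring. Qed.

Lemma e2pi_0 : e2pi 0 = 1%C.
Proof.
  unfold e2pi, cexp. replace (two_pi_i * 0)%C with (RtoC 0) by ring. simpl.
  rewrite exp_0, cos_0, sin_0. unfold Cmult, RtoC. simpl. f_equal; ring.
Qed.

Lemma e2pi_opp c : (e2pi c * e2pi (- c))%C = 1%C.
Proof. rewrite <- e2pi_add, Cplus_opp_r. apply e2pi_0. Qed.

Lemma e2pi_neq0 c : e2pi c <> 0%C.
Proof.
  intros H. pose proof (e2pi_opp c) as E. rewrite H, Cmult_0_l in E. apply C1_nz. auto.
Qed.

Lemma e2pi_inv c : (/ e2pi c)%C = e2pi (- c).
Proof.
  pose proof (e2pi_neq0 c).
  replace (e2pi (- c)) with (/ e2pi c * (e2pi c * e2pi (- c)))%C by (field; assumption).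
  rewrite e2pi_opp. ring.
Qed.

Lemma Cmod_e2pi_lt_1 c : Cmod (e2pi c) < 1 <-> 0 < Im c.
Proof.
  unfold e2pi. rewrite Cmod_cexp, <- exp_0.
  replace (Re (two_pi_i * c)%C) with (- (2 * PI) * Im c) by (destruct c; simpl; ring).
  pose proof PI_RGT_0. split; intros Hc.
  - apply exp_lt_inv in Hc. nra.
  - apply exp_increasing. nra.
Qed.

Definition qpochE (x g d e : C) : C := qpoch0 (x * e2pi g)%C (e2pi d) (e2pi e).

Lemma qpochE_split x g d e : 0 < Im d -> 0 < Im e ->
  qpochE x g d e = (qpochE x g (d + e) e * qpochE x (g + d) (d + e) d)%C.
Proof.
  intros Hd He. unfold qpochE.
  rewrite qpoch0_split by (apply Cmod_e2pi_lt_1; assumption).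
  rewrite !e2pi_add, Cmult_assoc. reflexivity.
Qed.

Lemma qpochE_sym x g d e : qpochE x g d e = qpochE x g e d.
Proof. apply qpoch0_sym. Qed.

(* [qpochE x g d e] converges for [Im d, Im e > 0]; by the inversion rules of [qpoch],
   [(x | e(a), e(-b))_oo] is [qnum / qden] with one of the two equal to [1]. *)
Definition qnum x a b : C :=
  if Rlt_dec 0 (Im a) then (if Rlt_dec (Im b) 0 then qpochE x 0 a (- b) else 1)
  else (if Rlt_dec (Im b) 0 then 1 else qpochE x (b - a) (- a) b).

Definition qden x a b : C :=
  if Rlt_dec 0 (Im a) then (if Rlt_dec (Im b) 0 then 1 else qpochE x b a b)
  else (if Rlt_dec (Im b) 0 then qpochE x (- a) (- a) (- b) else 1).

Lemma qpoch_e2pi x a b : Im a <> 0 -> Im b <> 0 ->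
  qpoch x (e2pi a) (e2pi (- b)) = (qnum x a b / qden x a b)%C.
Proof.
  intros Ha Hb.
  assert (Hia : (/ e2pi a)%C = e2pi (- a)) by apply e2pi_inv.
  assert (Hib : (/ e2pi (- b))%C = e2pi b) by (rewrite e2pi_inv; f_equal; ring).
  assert (Hab : (/ (e2pi a * e2pi (- b)))%C = e2pi (b - a)).
  { rewrite <- e2pi_add, e2pi_inv. f_equal. ring. }
  assert (Hx0 : (x * e2pi 0)%C = x) by (rewrite e2pi_0; ring).
  unfold qpoch, qnum, qden, qpochE, Cdiv.
  rewrite Hia, Hib, Hab, Hx0.
  destruct (Rlt_dec (Cmod (e2pi a)) 1) as [A|A]; rewrite Cmod_e2pi_lt_1 in A;
  destruct (Rlt_dec (Cmod (e2pi (- b))) 1) as [B|B]; rewrite Cmod_e2pi_lt_1, im_opp in B;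
  destruct (Rlt_dec 0 (Im a)); destruct (Rlt_dec (Im b) 0); try lra; try ring; field.
Qed.

Lemma qden_neq0 x a b : qpoch_defined x (e2pi a) (e2pi (- b)) -> qden x a b <> 0%C.
Proof.
  assert (Hia : (/ e2pi a)%C = e2pi (- a)) by apply e2pi_inv.
  assert (Hib : (/ e2pi (- b))%C = e2pi b) by (rewrite e2pi_inv; f_equal; ring).
  unfold qpoch_defined, qden, qpochE, Cdiv. rewrite Hia, Hib.
  destruct (Rlt_dec (Cmod (e2pi a)) 1) as [A|A]; rewrite Cmod_e2pi_lt_1 in A;
  destruct (Rlt_dec (Cmod (e2pi (- b))) 1) as [B|B]; rewrite Cmod_e2pi_lt_1, im_opp in B;
  destruct (Rlt_dec 0 (Im a)); destruct (Rlt_dec (Im b) 0); intros H; try lra;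
  solve [assumption | apply C1_nz].
Qed.

Lemma qnum_reverse x a b : Im a <> 0 -> Im b <> 0 -> qnum x (- b) (- a) = qnum x a b.
Proof.
  intros Ha Hb. unfold qnum. rewrite !im_opp.
  destruct (Rlt_dec 0 (Im a)), (Rlt_dec (Im b) 0), (Rlt_dec 0 (- Im b)), (Rlt_dec (- Im a) 0);
    try lra; try reflexivity; rewrite qpochE_sym; f_equal; ring.
Qed.

Lemma qden_reverse x a b : Im a <> 0 -> Im b <> 0 -> qden x (- b) (- a) = qden x a b.
Proof.
  intros Ha Hb. unfold qden. rewrite !im_opp.
  destruct (Rlt_dec 0 (Im a)), (Rlt_dec (Im b) 0), (Rlt_dec 0 (- Im b)), (Rlt_dec (- Im a) 0);
    try lra; try reflexivity; rewrite qpochE_sym; f_equal; ring.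
Qed.

Lemma qfrac_flip_pos x a b : Im a <> 0 -> Im b <> 0 -> 0 < Im (a + b) ->
  (qnum x a (a + b) * qnum x (a + b) b * qden x a b
   = qnum x a b * qden x a (a + b) * qden x (a + b) b)%C.
Proof.
  intros Ha Hb Hab. pose proof (im_plus a b) as Hs.
  unfold qnum, qden.
  destruct (Rlt_dec 0 (Im a)), (Rlt_dec (Im b) 0), (Rlt_dec 0 (Im (a + b))),
    (Rlt_dec (Im (a + b)) 0); try lra.
  - rewrite (qpochE_split x 0 (a + b) (- b)) by (rewrite ?im_opp; lra).
    replace (a + b + - b)%C with a by ring. replace (0 + (a + b))%C with (a + b)%C by ring.
    ring.
  - rewrite (qpochE_split x b a b) by lra.
    replace (b + a)%C with (a + b)%C by ring. rewrite (qpochE_sym x (a + b) a). ring.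
  - replace (a + b - a)%C with b by ring.
    rewrite (qpochE_split x b (- a) (a + b)) by (rewrite ?im_opp; lra).
    replace (- a + (a + b))%C with b by ring.
    replace (b + - a)%C with (b - a)%C by ring.
    rewrite (qpochE_sym x b b), (qpochE_sym x (b - a) b). ring.
Qed.

(* Reversing the orientation, [(a, b) -> (- b, - a)], reduces the case [Im (a + b) < 0]
   to the previous one. *)
Lemma qfrac_flip x a b : Im a <> 0 -> Im b <> 0 -> Im (a + b) <> 0 ->
  (qnum x a (a + b) * qnum x (a + b) b * qden x a b
   = qnum x a b * qden x a (a + b) * qden x (a + b) b)%C.
Proof.
  intros Ha Hb Hab. destruct (Rlt_dec 0 (Im (a + b))) as [Hpos|Hneg].
  - apply qfrac_flip_pos; assumption.
  - pose proof (qfrac_flip_pos x (- b) (- a)) as H.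
    rewrite !im_opp in H. rewrite im_plus in Hab, Hneg.
    replace (- b + - a)%C with (- (a + b))%C in H by ring.
    rewrite !qnum_reverse, !qden_reverse in H by (rewrite ?im_plus; lra).
    rewrite im_opp, im_plus in H.
    transitivity (qnum x (a + b) b * qnum x a (a + b) * qden x a b)%C; [ring|].
    rewrite H by lra. ring.
Qed.

(** * Unimodular fans *)

Open Scope Z_scope.

Lemma Z_seq_peak (f : nat -> Z) n : f 0%nat < f 1%nat -> f (S (S n)) <= f (S n) ->
  exists j, (j <= n)%nat /\ f j < f (S j) /\ f (S (S j)) <= f (S j).
Proof.
  intros H0. induction n as [|n IH]; intros Hn.
  - exists 0%nat. lia.
  - destruct (Z_le_gt_dec (f (S (S n))) (f (S n))) as [Hle|Hgt].
    + destruct (IH Hle) as [j Hj]. exists j. lia.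
    + exists (S n). lia.
Qed.

Lemma zcross_consecutive_sum (a b c : Z * Z) : zcross a b = 1 -> zcross b c = 1 ->
  fst a + fst c = zcross a c * fst b /\ snd a + snd c = zcross a c * snd b.
Proof.
  destruct a as [a1 a2], b as [b1 b2], c as [c1 c2]. unfold zcross. simpl. intros H1 H2.
  assert (I1 : (a1 * b2 - a2 * b1) * c1 + (b1 * c2 - b2 * c1) * a1
               = (a1 * c2 - a2 * c1) * b1) by ring.
  assert (I2 : (a1 * b2 - a2 * b1) * c2 + (b1 * c2 - b2 * c1) * a2
               = (a1 * c2 - a2 * c1) * b2) by ring.
  rewrite H1, H2 in I1, I2. lia.
Qed.

Record unimodular_fan (v w : Z * Z) (n : nat) (u : nat -> Z * Z) : Prop := {
  fan_first : u O = v;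
  fan_last : u (S n) = w;
  fan_inside : forall i, (1 <= i <= n)%nat -> 0 < zcross (u i) w /\ 0 < zcross v (u i);
  fan_unimodular : forall i, (i <= n)%nat -> zcross (u i) (u (S i)) = 1 }.

(* The height [u x (w - v)] is [1] on [v] and [w], at least [2] strictly inside the
   wedge, and linear; at a peak [u (S j)] the sum relation forces [u j x u (j+2) = 1]. *)
Lemma fan_sum_ray v w n u : zcross v w = 1 -> unimodular_fan v w (S n) u ->
  exists j, (j <= n)%nat /\ zcross (u j) (u (S (S j))) = 1 /\
    fst (u (S j)) = fst (u j) + fst (u (S (S j))) /\
    snd (u (S j)) = snd (u j) + snd (u (S (S j))).
Proof.
  intros Hvw [H0 Hn Hin Hc].
  set (h := fun i => zcross (u i) (fst w - fst v, snd w - snd v)).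
  assert (Hends : h 0%nat = 1 /\ h (S (S n)) = 1).
  { unfold h. rewrite H0, Hn. unfold zcross in *. simpl. lia. }
  assert (Hmid : forall i, (1 <= i <= S n)%nat -> 2 <= h i).
  { intros i Hi. specialize (Hin i Hi). unfold h, zcross in *. simpl. lia. }
  assert (Hall : forall i, (i <= S (S n))%nat -> 1 <= h i).
  { intros i Hi. destruct (Nat.eq_dec i 0) as [->|]; [lia|].
    destruct (Nat.eq_dec i (S (S n))) as [->|]; [lia|].
    pose proof (Hmid i ltac:(lia)). lia. }
  destruct (Z_seq_peak h n) as [j [Hj [Hup Hdown]]].
  { pose proof (Hmid 1%nat). lia. }
  { pose proof (Hmid (S n)). lia. }
  destruct (zcross_consecutive_sum (u j) (u (S j)) (u (S (S j)))) as [E1 E2];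
    [apply Hc; lia | apply Hc; lia|].
  assert (Hh : h j + h (S (S j)) = zcross (u j) (u (S (S j))) * h (S j)).
  { unfold h, zcross. simpl.
    transitivity ((fst (u j) + fst (u (S (S j)))) * (snd w - snd v)
                  - (snd (u j) + snd (u (S (S j)))) * (fst w - fst v)); [ring|].
    rewrite E1, E2. unfold zcross. ring. }
  assert (Hk : zcross (u j) (u (S (S j))) = 1).
  { pose proof (Hall j ltac:(lia)). pose proof (Hall (S (S j)) ltac:(lia)). nia. }
  exists j. rewrite Hk in E1, E2. lia.
Qed.

Definition skip {A : Type} (j : nat) (u : nat -> A) : nat -> A :=
  fun k => if (k <=? j)%nat then u k else u (S k).

Lemma skip_le {A} j (u : nat -> A) k : (k <= j)%nat -> skip j u k = u k.
Proof. intros H. unfold skip. destruct (Nat.leb_spec k j); [reflexivity | lia]. Qed.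

Lemma skip_gt {A} j (u : nat -> A) k : (j < k)%nat -> skip j u k = u (S k).
Proof. intros H. unfold skip. destruct (Nat.leb_spec k j); [lia | reflexivity]. Qed.

Lemma skip_range {A} (P : A -> Prop) j (u : nat -> A) lo hi :
  (forall i, (lo <= i <= S hi)%nat -> P (u i)) ->
  forall i, (lo <= i <= hi)%nat -> P (skip j u i).
Proof.
  intros H i Hi. destruct (Nat.le_gt_cases i j).
  - rewrite skip_le by lia. apply H. lia.
  - rewrite skip_gt by lia. apply H. lia.
Qed.

Lemma fan_skip v w n u j : unimodular_fan v w (S n) u -> (j <= n)%nat ->
  zcross (u j) (u (S (S j))) = 1 -> unimodular_fan v w n (skip j u).
Proof.
  intros [H0 Hn Hin Hc] Hj Hk. split.
  - rewrite skip_le by lia. exact H0.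
  - rewrite skip_gt by lia. exact Hn.
  - apply (skip_range (fun p => 0 < zcross p w /\ 0 < zcross v p)). exact Hin.
  - intros i Hi. destruct (Nat.lt_total i j) as [Hlt|[->|Hgt]].
    + rewrite !skip_le by lia. apply Hc. lia.
    + rewrite skip_le, skip_gt by lia. exact Hk.
    + rewrite !skip_gt by lia. apply Hc. lia.
Qed.

Open Scope R_scope.

Definition chain_prod {A : Type} (f : A -> A -> C) (n : nat) (u : nat -> A) : C :=
  cprod n (fun i => f (u i) (u (S i))).

Lemma chain_prod_skip {A} (f : A -> A -> C) (u : nat -> A) j n : (j <= n)%nat ->
  exists pre suf,
    chain_prod f (S (S n)) u = (pre * f (u j) (u (S j)) * f (u (S j)) (u (S (S j))) * suf)%C
    /\ chain_prod f (S n) (skip j u) = (pre * f (u j) (u (S (S j))) * suf)%C.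
Proof.
  intros Hj. unfold chain_prod.
  exists (cprod j (fun i => f (u i) (u (S i)))),
    (cprod (n - j) (fun k => f (u (S (S (j + k)))) (u (S (S (S (j + k))))))). split.
  - replace (S (S n)) with (j + (2 + (n - j)))%nat by lia.
    rewrite !cprod_add. simpl. rewrite Nat.add_0_r, Nat.add_1_r.
    rewrite (cprod_ext (n - j) _ (fun k => f (u (S (S (j + k)))) (u (S (S (S (j + k)))))))
      by (intros k _; replace (j + S (S k))%nat with (S (S (j + k))) by lia; reflexivity).
    ring.
  - replace (S n) with (j + (1 + (n - j)))%nat by lia.
    rewrite !cprod_add. simpl. rewrite Nat.add_0_r.
    rewrite (cprod_ext j _ (fun i => f (u i) (u (S i))))
      by (intros; rewrite !skip_le by lia; reflexivity).
    rewrite skip_le, skip_gt by lia.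
    rewrite (cprod_ext (n - j) _ (fun k => f (u (S (S (j + k)))) (u (S (S (S (j + k)))))))
      by (intros k _; rewrite !skip_gt by lia;
          replace (j + S k)%nat with (S (j + k)) by lia; reflexivity).
    ring.
Qed.

Definition ray_num x om (p q : Z * Z) : C := qnum x (ccross om p) (ccross om q).
Definition ray_den x om (p q : Z * Z) : C := qden x (ccross om p) (ccross om q).

Lemma qpoch_ray x om p q : Im (ccross om p) <> 0 -> Im (ccross om q) <> 0 ->
  qpoch x (cexp (two_pi_i * ccross om p)) (cexp (- (two_pi_i * ccross om q)))
  = (ray_num x om p q / ray_den x om p q)%C.
Proof.
  intros Hp Hq. unfold ray_num, ray_den. rewrite <- qpoch_e2pi by assumption.
  unfold e2pi. do 2 f_equal. ring.
Qed.

Lemma ray_den_neq0 x om p q :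
  qpoch_defined x (cexp (two_pi_i * ccross om p)) (cexp (- (two_pi_i * ccross om q))) ->
  ray_den x om p q <> 0%C.
Proof.
  intros H. apply qden_neq0. unfold e2pi.
  replace (two_pi_i * - ccross om q)%C with (- (two_pi_i * ccross om q))%C by ring.
  exact H.
Qed.

Lemma ccross_sum om (p q r : Z * Z) :
  fst q = (fst p + fst r)%Z -> snd q = (snd p + snd r)%Z ->
  ccross om q = (ccross om p + ccross om r)%C.
Proof.
  intros E1 E2. unfold ccross. rewrite E1, E2, !plus_IZR, !RtoC_plus. ring.
Qed.

Lemma qnum_or_qden_1 x a b : qnum x a b = 1%C \/ qden x a b = 1%C.
Proof. unfold qnum, qden. destruct (Rlt_dec 0 (Im a)), (Rlt_dec (Im b) 0); auto. Qed.

Lemma chain_flip_step (pN sN pD sD N3 D3 nac ncb nab dac dcb dab : C) :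
  nab = 1%C \/ dab = 1%C ->
  (nac * ncb * dab = nab * dac * dcb)%C ->
  (pN * nab * sN * D3 = N3 * (pD * dab * sD))%C ->
  (pN * nac * ncb * sN * D3 = N3 * (pD * dac * dcb * sD))%C.
Proof.
  intros [-> | ->] Hflip IH.
  - transitivity (pN * 1 * sN * D3 * (nac * ncb))%C; [ring|]. rewrite IH.
    transitivity (N3 * pD * sD * (nac * ncb * dab))%C; [ring|]. rewrite Hflip. ring.
  - transitivity (pN * sN * D3 * (nac * ncb * 1))%C; [ring|]. rewrite Hflip.
    transitivity ((pN * nab * sN * D3) * (dac * dcb))%C; [ring|]. rewrite IH. ring.
Qed.

Lemma fan_flip x om v w : zcross v w = 1%Z -> forall n u,
  unimodular_fan v w n u -> (forall i, (i <= S n)%nat -> Im (ccross om (u i)) <> 0) ->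
  (chain_prod (ray_num x om) (S n) u * ray_den x om v w
   = ray_num x om v w * chain_prod (ray_den x om) (S n) u)%C.
Proof.
  intros Hvw n. induction n as [|n IH]; intros u Hfan Him.
  - destruct Hfan as [H0 Hn _ _]. unfold chain_prod. simpl. rewrite H0, Hn. ring.
  - destruct (fan_sum_ray v w n u Hvw Hfan) as [j [Hj [Hk [E1 E2]]]].
    assert (Him' : forall i, (i <= S n)%nat -> Im (ccross om (skip j u i)) <> 0).
    { intros i Hi. apply (skip_range (fun p => Im (ccross om p) <> 0) j u 0 (S n));
        [intros; apply Him |]; lia. }
    specialize (IH (skip j u) (fan_skip v w n u j Hfan Hj Hk) Him').
    destruct (chain_prod_skip (ray_num x om) u j n Hj) as [pN [sN [EN EN']]].
    destruct (chain_prod_skip (ray_den x om) u j n Hj) as [pD [sD [ED ED']]].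
    rewrite EN', ED' in IH. rewrite EN, ED.
    unfold ray_num, ray_den in *.
    rewrite (ccross_sum om (u j) (u (S j)) (u (S (S j))) E1 E2).
    eapply chain_flip_step; [| | exact IH].
    + apply qnum_or_qden_1.
    + apply qfrac_flip; [| | rewrite <- (ccross_sum om (u j) (u (S j)) (u (S (S j))) E1 E2)];
        apply Him; lia.
Qed.

Lemma zcross_wedge_interior (v w p : Z * Z) : zcross v w = 1%Z ->
  (exists a b : R, 0 < a /\ 0 < b /\
     IZR (fst p) = a * IZR (fst v) + b * IZR (fst w) /\
     IZR (snd p) = a * IZR (snd v) + b * IZR (snd w)) ->
  (0 < zcross p w)%Z /\ (0 < zcross v p)%Z.
Proof.
  intros Hvw [a [b [Ha [Hb [E1 E2]]]]].
  apply (f_equal IZR) in Hvw. unfold zcross in *. rewrite minus_IZR, !mult_IZR in Hvw.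
  split; apply lt_IZR; rewrite minus_IZR, !mult_IZR, E1, E2.
  - replace (_ - _) with (a * (IZR (fst v) * IZR (snd w) - IZR (snd v) * IZR (fst w)))
      by ring. rewrite Hvw. lra.
  - replace (_ - _) with (b * (IZR (fst v) * IZR (snd w) - IZR (snd v) * IZR (fst w)))
      by ring. rewrite Hvw. lra.
Qed.

Lemma Cdiv_eq_cross (a b c d : C) : b <> 0%C -> d <> 0%C ->
  (a * d = c * b)%C -> (a / b = c / d)%C.
Proof.
  intros Hb Hd H.
  replace (a / b)%C with (a * d / (b * d))%C by (field; split; assumption).
  rewrite H. field. split; assumption.
Qed.

Theorem proposition5p9
  (v w : Z * Z) (n : nat) (u : nat -> Z * Z) (z : C) (om : C * C)
  (hv : zprimitive v) (hw : zprimitive w) (hvw : zcross v w = 1%Z)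
  (hu0 : u O = v) (hun : u (S n) = w)
  (hprim : forall i, (1 <= i <= n)%nat -> zprimitive (u i))
  (hpos : forall i, (1 <= i <= n)%nat ->
     exists a b : R, 0 < a /\ 0 < b /\
       IZR (fst (u i)) = a * IZR (fst v) + b * IZR (fst w) /\
       IZR (snd (u i)) = a * IZR (snd v) + b * IZR (snd w))
  (hcross : forall i, (i <= n)%nat -> zcross (u i) (u (S i)) = 1%Z)
  (hom : forall i, (i <= S n)%nat -> Im (ccross om (u i)) <> 0)
  (hdefL : forall i, (i <= n)%nat ->
     qpoch_defined (cexp (Cmult two_pi_i z))
       (cexp (Cmult two_pi_i (ccross om (u i))))
       (cexp (Copp (Cmult two_pi_i (ccross om (u (S i)))))))
  (hdefR : qpoch_defined (cexp (Cmult two_pi_i z))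
       (cexp (Cmult two_pi_i (ccross om v)))
       (cexp (Copp (Cmult two_pi_i (ccross om w))))) :
  cprod (S n) (fun i =>
     qpoch (cexp (Cmult two_pi_i z))
       (cexp (Cmult two_pi_i (ccross om (u i))))
       (cexp (Copp (Cmult two_pi_i (ccross om (u (S i)))))))
  = qpoch (cexp (Cmult two_pi_i z))
       (cexp (Cmult two_pi_i (ccross om v)))
       (cexp (Copp (Cmult two_pi_i (ccross om w)))).
Proof.
  set (x := cexp (two_pi_i * z)%C).
  assert (Hfan : unimodular_fan v w n u).
  { split; try assumption. intros i Hi. apply zcross_wedge_interior; auto. }
  assert (Hv : Im (ccross om v) <> 0) by (rewrite <- hu0; apply hom; lia).
  assert (Hw : Im (ccross om w) <> 0) by (rewrite <- hun; apply hom; lia).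
  rewrite (cprod_ext _ _ (fun i => ray_num x om (u i) (u (S i)) / ray_den x om (u i) (u (S i)))%C)
    by (intros i Hi; apply qpoch_ray; apply hom; lia).
  rewrite cprod_div by (intros i Hi; apply ray_den_neq0, hdefL; lia).
  rewrite qpoch_ray by assumption.
  apply Cdiv_eq_cross.
  - apply cprod_neq0. intros i Hi. apply ray_den_neq0, hdefL. lia.
  - apply ray_den_neq0, hdefR.
  - apply (fan_flip x om v w hvw n u Hfan hom).
Qed.
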